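(* Let $\mathbb{F}\in\{\mathbb{R},\mathbb{C},\mathbb{H}\}$, $G=\mathrm{SL}(3,\mathbb{F})$, $g\in G$ and $t\in V$. If $g\in Ka_tH$, then $$\Phi(g)=\Big(\sum_{i=1}^3e^{4t_i}\Big)\Big(\sum_{i=1}^3e^{-4t_i}\Big)=3+2\cosh(4(t_1-t_2))+2\cosh(4(t_1-t_3))+2\cosh(4(t_2-t_3)).$$ In particular $\Phi$ is left $K$-invariant, right $H$-invariant, $\Phi\circ\sigma=\Phi$, and the restriction of $\Phi$ to $A=\{a_t:t\in V\}$ is invariant under the Weyl group (permutations of $t_1,t_2,t_3$).
   Context: $\theta(g)=(g^{-1})^\dagger$, $J=\mathrm{diag}(1,-1,-1)$, $\sigma(g)=J\theta(g)J$, $K=G^\theta$, $H$ the identity component of $G^\sigma$. $\Phi(g)=\|g\sigma(g)^{-1}\|_{HS}^2\,\|\sigma(g)g^{-1}\|_{HS}^2$ where $\|X\|_{HS}^2=\sum_{i,j}|X_{ij}|^2$. $V=\{t\in\mathbb{R}^3:t_1+t_2+t_3=0\}$ and $a_t=\mathrm{diag}(e^{t_1},e^{t_2},e^{t_3})$. *)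

From HB Require Import structures.
From mathcomp Require Import all_boot all_order all_algebra.
From mathcomp Require Import complex.
From mathcomp Require Import reals sequences exp.
From mathcomp Require Import ring.
From Stdlib Require Import ClassicalEpsilon.

Set Implicit Arguments.
Unset Strict Implicit.
Unset Printing Implicit Defensive.

Import Order.TTheory GRing.Theory Num.Theory.
Local Open Scope ring_scope.

(* Quaternions over a real field R : Quat a b c d = a + b i + c j + d k *)
Record quat (R : Type) := Quat { qa : R; qb : R; qc : R; qd : R }.

Section Quaternions.
Variable R : realType.

Definition quat_to (x : quat R) := (qa x, qb x, qc x, qd x).
Definition quat_of (x : R * R * R * R) := let: (a, b, c, d) := x in Quat a b c d.
Lemma quat_toK : cancel quat_to quat_of. Proof. by case. Qed.

HB.instance Definition _ := Choice.copy (quat R) (can_type quat_toK).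

Definition q0 : quat R := Quat 0 0 0 0.
Definition q1 : quat R := Quat 1 0 0 0.
Definition qopp (x : quat R) := Quat (- qa x) (- qb x) (- qc x) (- qd x).
Definition qadd (x y : quat R) :=
  Quat (qa x + qa y) (qb x + qb y) (qc x + qc y) (qd x + qd y).
(* Hamilton product: i^2 = j^2 = k^2 = ijk = -1 *)
Definition qmul (x y : quat R) :=
  Quat (qa x * qa y - qb x * qb y - qc x * qc y - qd x * qd y)
       (qa x * qb y + qb x * qa y + qc x * qd y - qd x * qc y)
       (qa x * qc y - qb x * qd y + qc x * qa y + qd x * qb y)
       (qa x * qd y + qb x * qc y - qc x * qb y + qd x * qa y).

Lemma qaddA : associative qadd.
Proof. by move=> [? ? ? ?] [? ? ? ?] [? ? ? ?]; rewrite /qadd /=; congr Quat; ring. Qed.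
Lemma qaddC : commutative qadd.
Proof. by move=> [? ? ? ?] [? ? ? ?]; rewrite /qadd /=; congr Quat; ring. Qed.
Lemma qadd0 : left_id q0 qadd.
Proof. by move=> [? ? ? ?]; rewrite /qadd /=; congr Quat; ring. Qed.
Lemma qaddN : left_inverse q0 qopp qadd.
Proof. by move=> [? ? ? ?]; rewrite /qadd /=; congr Quat; ring. Qed.
Lemma qmulA : associative qmul.
Proof. by move=> [? ? ? ?] [? ? ? ?] [? ? ? ?]; rewrite /qmul /=; congr Quat; ring. Qed.
Lemma qmul1 : left_id q1 qmul.
Proof. by move=> [? ? ? ?]; rewrite /qmul /=; congr Quat; ring. Qed.
Lemma qmulr1 : right_id q1 qmul.
Proof. by move=> [? ? ? ?]; rewrite /qmul /=; congr Quat; ring. Qed.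
Lemma qmulDl : left_distributive qmul qadd.
Proof. by move=> [? ? ? ?] [? ? ? ?] [? ? ? ?]; rewrite /qmul /qadd /=; congr Quat; ring. Qed.
Lemma qmulDr : right_distributive qmul qadd.
Proof. by move=> [? ? ? ?] [? ? ? ?] [? ? ? ?]; rewrite /qmul /qadd /=; congr Quat; ring. Qed.
Lemma q1_neq0 : q1 != q0.
Proof. by apply/eqP => -[] /eqP; rewrite oner_eq0. Qed.

HB.instance Definition _ := GRing.isNzRing.Build (quat R)
  qaddA qaddC qadd0 qaddN qmulA qmul1 qmulr1 qmulDl qmulDr q1_neq0.

End Quaternions.

Inductive fld := FR | FC | FH.

Definition scal (R : realType) (F : fld) : nzRingType :=
  match F with
  | FR => R
  | FC => (R[i])%C
  | FH => quat R
  end.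

Definition sconj (R : realType) (F : fld) : scal R F -> scal R F :=
  match F as F0 return scal R F0 -> scal R F0 with
  | FR => fun x => x
  | FC => fun z => conjc z
  | FH => fun q => Quat (qa q) (- qb q) (- qc q) (- qd q)
  end.

Definition snorm2 (R : realType) (F : fld) : scal R F -> R :=
  match F as F0 return scal R F0 -> R with
  | FR => fun x => x ^+ 2
  | FC => fun z => complex.Re z ^+ 2 + complex.Im z ^+ 2
  | FH => fun q => qa q ^+ 2 + qb q ^+ 2 + qc q ^+ 2 + qd q ^+ 2
  end.

Definition sreal (R : realType) (F : fld) : R -> scal R F :=
  match F as F0 return R -> scal R F0 with
  | FR => fun x => x
  | FC => fun x => (x%:C)%C
  | FH => fun x => Quat x 0 0 0
  end.

Section Matrices.
Variables (R : realType) (F : fld).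
Local Notation S := (scal R F).
Local Notation M := 'M[S]_3.

(* Complex 2x2 representation of a quaternion a+bi+cj+dk = z + w j,
   z = a + b i, w = c + d i  |->  [[z, w], [-conj w, conj z]] *)
Definition quat_cmx (q : quat R) : 'M[R[i]]_2 :=
  \matrix_(i < 2, j < 2)
    (if i == 0 then (if j == 0 then Complex (qa q) (qb q) else Complex (qc q) (qd q))
     else (if j == 0 then - conjc (Complex (qc q) (qd q))
           else conjc (Complex (qa q) (qb q))))%C.

Definition qmx_cmx (g : 'M[quat R]_3) : 'M[R[i]]_6 :=
  \matrix_(i < 6, j < 6)
    quat_cmx (g (inord (i %/ 2)) (inord (j %/ 2))) (inord (i %% 2)) (inord (j %% 2)).

(* "determinant equals 1": the usual determinant for R and C; for H the
   Study determinant (determinant of the complex 6x6 image), which is 1 iff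
   the Dieudonne determinant is 1. *)
Definition det_one : M -> Prop :=
  match F as F0 return 'M[scal R F0]_3 -> Prop with
  | FR => fun g => \det g = 1
  | FC => fun g => \det g = 1
  | FH => fun g => \det (qmx_cmx g) = 1
  end.

Definition invertible (g : M) : Prop := exists h : M, g * h = 1 /\ h * g = 1.

(* the inverse matrix (g itself when g is not invertible) *)
Definition minv (g : M) : M :=
  match excluded_middle_informative (invertible g) with
  | left P => proj1_sig (constructive_indefinite_description _ P)
  | right _ => g
  end.

Definition SL3 : M -> Prop := fun g => invertible g /\ det_one g.

Definition adjm (g : M) : M := \matrix_(i, j) sconj (g j i).

Definition theta (g : M) : M := adjm (minv g).

Definition Jm : M := \matrix_(i, j)
  (if i == j then (if i == 0 then 1 else -1) else 0).

Definition sigma (g : M) : M := Jm * theta g * Jm.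

Definition Kgrp : M -> Prop := fun g => SL3 g /\ theta g = g.

Definition Gsigma : M -> Prop := fun g => SL3 g /\ sigma g = g.

Definition hs2 (X : M) : R := \sum_i \sum_j snorm2 (X i j).

Definition path_continuous (gam : R -> M) : Prop :=
  forall s0, 0 <= s0 <= 1 -> forall eps, 0 < eps ->
    exists2 del, 0 < del & forall s, 0 <= s <= 1 -> `|s - s0| < del ->
      hs2 (gam s - gam s0) < eps.

(* H = identity component of G^sigma (= its path component of 1, G^sigma
   being a closed linear Lie group) *)
Definition Hgrp : M -> Prop := fun h =>
  exists gam : R -> M, path_continuous gam /\
    (forall s, 0 <= s <= 1 -> Gsigma (gam s)) /\ gam 0 = 1 /\ gam 1 = h.

Definition Phi (g : M) : R := hs2 (g * minv (sigma g)) * hs2 (sigma g * minv g).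

Definition a_t (t : 'I_3 -> R) : M :=
  \matrix_(i, j) (if i == j then sreal F (expR (t i)) else 0).

End Matrices.

Definition coshR (R : realType) (x : R) : R := (expR x + expR (- x)) / 2.

Definition i1 : 'I_3 := ord0.
Definition i2 : 'I_3 := inord 1.
Definition i3 : 'I_3 := inord 2.

From HB Require Import structures.
From mathcomp Require Import all_boot all_order all_algebra.
From mathcomp Require Import fingroup perm reals sequences exp.
From mathcomp Require Import complex ring.
From Stdlib Require Import ClassicalEpsilon.
Import Order.TTheory GRing.Theory Num.Theory.
Local Open Scope ring_scope.
Set Implicit Arguments. Unset Strict Implicit. Unset Printing Implicit Defensive.

(* Elements of K are unitary and fixed by theta, so sigma k = J k J is unitary
   as well; left multiplication by k therefore changes g sigma(g)^-1 and
   sigma(g) g^-1 only by unitary factors on both sides, which the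
   Hilbert-Schmidt norm ignores.  An h with sigma h = h cancels outright:
   (gh) sigma(gh)^-1 = g sigma(g)^-1 and sigma(gh) (gh)^-1 = sigma(g) g^-1, so
   only H <= G^sigma is used, not the connectedness of H.  Hence
   Phi (k a_t h) = Phi a_t, and sigma a_t = a_(-t) gives
   Phi a_t = |a_(2t)|^2 |a_(-2t)|^2, a symmetric function of t. *)

Section Scalars.
Variables (R : realType) (F : fld).
Local Notation S := (scal R F).

Definition sRe : S -> R :=
  match F as F0 return scal R F0 -> R with
  | FR => fun x => x
  | FC => fun z => complex.Re z
  | FH => fun q => qa q
  end.

Fact sconj_is_zmod_morphism : zmod_morphism (@sconj R F).
Proof.
case: F => /=; [by [] | by move=> [a b] [c d]; congr Complex; simpl; ring |].
by move=> [a b c d] [e f g h]; congr Quat; simpl; ring.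
Qed.
HB.instance Definition _ :=
  GRing.isZmodMorphism.Build S S (@sconj R F) sconj_is_zmod_morphism.

Fact sRe_is_zmod_morphism : zmod_morphism sRe.
Proof. by rewrite /sRe; case: F => [|[a b] [c d]|[a b c d] [e f g h]]. Qed.
HB.instance Definition _ :=
  GRing.isZmodMorphism.Build S R sRe sRe_is_zmod_morphism.

Lemma sconjM (x y : S) : sconj (x * y) = sconj y * sconj x.
Proof.
case: F x y => /=; first by move=> x y; rewrite mulrC.
  by move=> [a b] [c d]; congr Complex; simpl; ring.
by move=> [a b c d] [e f g h]; congr Quat; simpl; ring.
Qed.

Lemma sconjK : involutive (@sconj R F).
Proof. by case: F => //= [[a b] | [a b c d]]; rewrite /= ?opprK. Qed.

Lemma sconj1 : sconj (1 : S) = 1.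
Proof. by case: F => //=; rewrite ?oppr0. Qed.

(* Quaternion multiplication is not commutative, but its real part is
   symmetric; this is what makes the real part of the trace cyclic. *)
Lemma sReC (x y : S) : sRe (x * y) = sRe (y * x).
Proof.
rewrite /sRe; case: F x y => [x y | [a b] [c d] | [a b c d] [e f g h]] /=.
all: by ring.
Qed.

Lemma snorm2E (x : S) : snorm2 x = sRe (x * sconj x).
Proof.
rewrite /sRe; case: F x => /= [x | [a b] | [a b c d]] /=; rewrite ?expr2; ring.
Qed.

Lemma srealM (x y : R) : sreal F (x * y) = sreal F x * sreal F y.
Proof. by case: F => //=; congr Complex || congr Quat; simpl; ring. Qed.

Lemma sreal1 : sreal F (1 : R) = 1.
Proof. by case: F. Qed.

Lemma sconj_real (x : R) : sconj (sreal F x) = sreal F x.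
Proof. by case: F => //=; rewrite ?oppr0. Qed.

Lemma snorm2_real (x : R) : snorm2 (sreal F x) = x ^+ 2.
Proof. by case: F => //=; rewrite ?expr0n ?addr0. Qed.

End Scalars.

Section Matrices.
Variables (R : realType) (F : fld).
Local Notation S := (scal R F).
Local Notation M := 'M[S]_3.
Local Notation J := (Jm R F).
Local Notation a_t := (@a_t R F).

Lemma sRe_mxtraceC m n (A : 'M[S]_(m, n)) (B : 'M[S]_(n, m)) :
  sRe (\tr (A *m B)) = sRe (\tr (B *m A)).
Proof.
rewrite /mxtrace !raddf_sum /=.
under eq_bigr do rewrite mxE raddf_sum.
under [RHS]eq_bigr do rewrite mxE raddf_sum.
rewrite exchange_big; apply: eq_bigr => i _.
by apply: eq_bigr => j _; apply: sReC.
Qed.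

Lemma adjmM (A B : M) : adjm (A * B) = adjm B * adjm A.
Proof.
rewrite -!mulmxE; apply/matrixP => i j; rewrite !mxE raddf_sum /=.
by apply: eq_bigr => k _; rewrite sconjM !mxE.
Qed.

Lemma adjmK : involutive (@adjm R F).
Proof. by move=> A; apply/matrixP => i j; rewrite !mxE sconjK. Qed.

Lemma adjm1 : adjm (1 : M) = 1.
Proof.
apply/matrixP => i j; rewrite !mxE eq_sym.
by case: (i == j); rewrite ?raddf0 ?sconj1.
Qed.

Lemma adjm_diag_mx (d : 'rV[S]_3) :
  adjm (diag_mx d) = diag_mx (map_mx (@sconj R F) d).
Proof.
apply/matrixP => i j; rewrite !mxE raddfMn eq_sym.
by case: eqP => [->|_]; rewrite ?mulr0n.
Qed.

Lemma hs2E (X : M) : hs2 X = sRe (\tr (X * adjm X)).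
Proof.
rewrite /hs2 /mxtrace raddf_sum; apply: eq_bigr => i _.
rewrite -mulmxE mxE raddf_sum; apply: eq_bigr => j _.
by rewrite mxE snorm2E.
Qed.

Lemma hs2_unitary_mul (U X V : M) :
  adjm U * U = 1 -> V * adjm V = 1 -> hs2 (U * X * V) = hs2 X.
Proof.
move=> UU VV; rewrite !hs2E !adjmM -!mulrA (mulrA V) VV mul1r.
by rewrite -mulmxE sRe_mxtraceC mulmxE -!mulrA UU mulr1.
Qed.

Lemma minvP (g : M) : invertible g -> g * minv g = 1 /\ minv g * g = 1.
Proof.
move=> ig; rewrite /minv; case: excluded_middle_informative => // P.
by case: (constructive_indefinite_description _ P).
Qed.

Lemma minv_unique (g h : M) : g * h = 1 -> h * g = 1 -> minv g = h.
Proof.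
move=> gh hg; have [_ Vg] := minvP (ex_intro _ h (conj gh hg)).
by rewrite -[minv g]mulr1 -gh mulrA Vg mul1r.
Qed.

Lemma invertibleM (A B : M) :
  invertible A -> invertible B -> invertible (A * B).
Proof.
move=> /minvP [AV VA] /minvP [BV VB]; exists (minv B * minv A); split.
  by rewrite mulrA -(mulrA A) BV mulr1 AV.
by rewrite mulrA -(mulrA (minv B)) VA mulr1 VB.
Qed.

Lemma minvM (A B : M) :
  invertible A -> invertible B -> minv (A * B) = minv B * minv A.
Proof.
move=> /minvP [AV VA] /minvP [BV VB]; apply: minv_unique.
  by rewrite mulrA -(mulrA A) BV mulr1 AV.
by rewrite mulrA -(mulrA (minv B)) VA mulr1 VB.
Qed.

Lemma JmE : J = diag_mx (\row_i (if i == 0 then 1 else -1)).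
Proof.
apply/matrixP => i j; rewrite !mxE.
by case: (i == j); rewrite ?mulr1n ?mulr0n.
Qed.

Lemma mulJJ : J * J = 1.
Proof.
rewrite JmE -mulmxE mulmx_diag -idmxE -diag_const_mx; congr diag_mx.
by apply/rowP => i; rewrite !mxE; case: (i == 0); rewrite ?mulr1 ?mulrNN ?mulr1.
Qed.

Lemma adjmJ : adjm J = J.
Proof.
rewrite JmE adjm_diag_mx; congr diag_mx.
by apply/rowP => i; rewrite !mxE; case: (i == 0); rewrite ?raddfN /= sconj1.
Qed.

Lemma conjJM (A B : M) : J * A * J * (J * B * J) = J * (A * B) * J.
Proof. by rewrite -!mulrA (mulrA J J) mulJJ mul1r !mulrA. Qed.

Lemma adjm_conjJ (A : M) : adjm (J * A * J) = J * adjm A * J.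
Proof. by rewrite !adjmM adjmJ mulrA. Qed.

Lemma sigmaE (g : M) : sigma g = J * adjm (minv g) * J.
Proof. by []. Qed.

Lemma sigma_mulV (g : M) : invertible g ->
  sigma g * (J * adjm g * J) = 1 /\ J * adjm g * J * sigma g = 1.
Proof.
move=> /minvP [gV Vg].
by rewrite sigmaE !conjJM -!adjmM gV Vg adjm1 mulr1 mulJJ.
Qed.

Lemma invertible_sigma (g : M) : invertible g -> invertible (sigma g).
Proof. by move=> /sigma_mulV; exists (J * adjm g * J). Qed.

Lemma minv_sigma (g : M) : invertible g -> minv (sigma g) = J * adjm g * J.
Proof. by move=> /sigma_mulV [? ?]; apply: minv_unique. Qed.

Lemma sigmaM (A B : M) :
  invertible A -> invertible B -> sigma (A * B) = sigma A * sigma B.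
Proof. by move=> iA iB; rewrite !sigmaE minvM // adjmM conjJM. Qed.

Lemma sigmaK (g : M) : invertible g -> sigma (sigma g) = g.
Proof.
move=> ig; rewrite [LHS]sigmaE minv_sigma // adjm_conjJ adjmK.
by rewrite !mulrA mulJJ mul1r -mulrA mulJJ mulr1.
Qed.

Lemma sigma_theta_id (k : M) : theta k = k -> sigma k = J * k * J.
Proof. by rewrite /sigma => ->. Qed.

Lemma minv_theta_id (k : M) : theta k = k -> minv k = adjm k.
Proof. by move=> thk; rewrite -[in RHS]thk /theta adjmK. Qed.

Lemma Hgrp_Gsigma (h : M) : Hgrp h -> Gsigma h.
Proof.
by move=> [gam [_ [Gsigma_gam [_ <-]]]]; apply: Gsigma_gam; rewrite ler01 lexx.
Qed.

Lemma Phi_Kmul (g k : M) : invertible g -> Kgrp k -> Phi (k * g) = Phi g.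
Proof.
move=> ig [[ik _] thk].
have kk : adjm k * k = 1 by rewrite -minv_theta_id //; case: (minvP ik).
rewrite /Phi sigmaM // (minvM (invertible_sigma ik) (invertible_sigma ig)).
rewrite (minvM ik ig) (minv_sigma ik).
rewrite (sigma_theta_id thk) (minv_theta_id thk); congr (_ * _).
  rewrite mulrA -(mulrA k); apply: hs2_unitary_mul => //.
  by rewrite adjm_conjJ adjmK conjJM kk mulr1 mulJJ.
rewrite mulrA -(mulrA (J * k * J)); apply: hs2_unitary_mul; last by rewrite adjmK.
by rewrite adjm_conjJ conjJM kk mulr1 mulJJ.
Qed.

Lemma Phi_mul_sigma_fixed (g h : M) :
  invertible g -> invertible h -> sigma h = h -> Phi (g * h) = Phi g.
Proof.
move=> ig ih sh; have [hV _] := minvP ih.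
rewrite /Phi sigmaM // sh (minvM (invertible_sigma ig) ih) (minvM ig ih).
by rewrite -!mulrA (mulrA h) hV mul1r (mulrA h) hV mul1r.
Qed.

Lemma Phi_sigma (g : M) : invertible g -> Phi (sigma g) = Phi g.
Proof. by move=> ig; rewrite /Phi sigmaK // mulrC. Qed.

Lemma a_tE (t : 'I_3 -> R) : a_t t = diag_mx (\row_i sreal F (expR (t i))).
Proof.
apply/matrixP => i j; rewrite !mxE.
by case: (i == j); rewrite ?mulr1n ?mulr0n.
Qed.

Lemma a_tD (s t : 'I_3 -> R) : a_t s * a_t t = a_t (fun i => s i + t i).
Proof.
rewrite !a_tE -mulmxE mulmx_diag; congr diag_mx.
by apply/rowP => i; rewrite !mxE -srealM expRD.
Qed.

Lemma a_t_eq1 (t : 'I_3 -> R) : (forall i, t i = 0) -> a_t t = 1.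
Proof.
move=> t0; rewrite a_tE -idmxE -diag_const_mx; congr diag_mx.
by apply/rowP => i; rewrite !mxE t0 expR0 sreal1.
Qed.

Lemma minv_a_t (t : 'I_3 -> R) : minv (a_t t) = a_t (fun i => - t i).
Proof.
by apply: minv_unique; rewrite a_tD; apply: a_t_eq1 => i; rewrite ?subrr ?addNr.
Qed.

Lemma invertible_a_t (t : 'I_3 -> R) : invertible (a_t t).
Proof.
exists (a_t (fun i => - t i)); rewrite !a_tD.
by split; apply: a_t_eq1 => i; rewrite ?subrr ?addNr.
Qed.

Lemma adjm_a_t (t : 'I_3 -> R) : adjm (a_t t) = a_t t.
Proof.
rewrite a_tE adjm_diag_mx; congr diag_mx.
by apply/rowP => i; rewrite !mxE sconj_real.
Qed.

Lemma conjJ_a_t (t : 'I_3 -> R) : J * a_t t * J = a_t t.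
Proof.
rewrite JmE a_tE -!mulmxE !mulmx_diag; congr diag_mx.
apply/rowP => i; rewrite !mxE.
by case: (i == 0); rewrite ?mul1r ?mulr1 ?mulN1r ?mulrN1 ?opprK.
Qed.

Lemma sigma_a_t (t : 'I_3 -> R) : sigma (a_t t) = a_t (fun i => - t i).
Proof. by rewrite sigmaE minv_a_t adjm_a_t conjJ_a_t. Qed.

Lemma hs2_a_t (t : 'I_3 -> R) : hs2 (a_t t) = \sum_i expR (2 * t i).
Proof.
apply: eq_bigr => i _; rewrite (bigD1 i) //= big1 => [|j ji].
  by rewrite mxE eqxx snorm2_real addr0 expRM_natl.
by rewrite mxE eq_sym (negPf ji) snorm2E mul0r raddf0.
Qed.

Lemma Phi_a_t (t : 'I_3 -> R) :
  Phi (a_t t) = (\sum_i expR (4 * t i)) * (\sum_i expR (- (4 * t i))).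
Proof.
rewrite /Phi sigma_a_t !minv_a_t !a_tD !hs2_a_t.
by congr (_ * _); apply: eq_bigr => i _; congr expR; ring.
Qed.

Lemma Phi_a_t_perm (t : 'I_3 -> R) (s : 'S_3) :
  Phi (a_t (fun i => t (s i))) = Phi (a_t t).
Proof.
by rewrite !Phi_a_t; congr (_ * _); rewrite [RHS](reindex_inj (@perm_inj _ s)).
Qed.

End Matrices.

Lemma sum3 (V : nmodType) (f : 'I_3 -> V) : \sum_i f i = f i1 + f i2 + f i3.
Proof.
rewrite !big_ord_recl big_ord0 addr0 addrA /i1 /i2 /i3.
by congr (_ + f _ + f _); apply: val_inj; rewrite /= inordK.
Qed.

Lemma sum_expR_mul_sum_expRN (R : realType) (x : 'I_3 -> R) :
  (\sum_i expR (x i)) * (\sum_i expR (- x i))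
    = 3 + 2 * coshR (x i1 - x i2) + 2 * coshR (x i1 - x i3)
        + 2 * coshR (x i2 - x i3).
Proof.
rewrite !sum3 /coshR !opprB !expRB !expRN.
have := expR_gt0 (x i1); have := expR_gt0 (x i2); have := expR_gt0 (x i3).
by move=> e1 e2 e3; field; rewrite ?gt_eqF.
Qed.

Theorem lemma1p9 (R : realType) (F : fld) :
  (forall (g : 'M[scal R F]_3) (t : 'I_3 -> R),
     \sum_i t i = 0 -> SL3 g ->
     (exists k h, Kgrp k /\ Hgrp h /\ g = k * @a_t R F t * h) ->
     Phi g = (\sum_i expR (4 * t i)) * (\sum_i expR (- (4 * t i))) /\
     (\sum_i expR (4 * t i)) * (\sum_i expR (- (4 * t i)))
       = 3 + 2 * coshR (4 * (t i1 - t i2)) + 2 * coshR (4 * (t i1 - t i3))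
           + 2 * coshR (4 * (t i2 - t i3))) /\
  (forall g k : 'M[scal R F]_3, SL3 g -> Kgrp k -> Phi (k * g) = Phi g) /\
  (forall g h : 'M[scal R F]_3, SL3 g -> Hgrp h -> Phi (g * h) = Phi g) /\
  (forall g : 'M[scal R F]_3, SL3 g -> Phi (sigma g) = Phi g) /\
  (forall (t : 'I_3 -> R) (s : 'S_3), \sum_i t i = 0 ->
     Phi (@a_t R F (fun i => t (s i))) = Phi (@a_t R F t)).
Proof.
have Hgrp_fixed (h : 'M[scal R F]_3) : Hgrp h -> invertible h /\ sigma h = h.
  by move=> /Hgrp_Gsigma [[ih _] sh].
split.
  move=> g t _ _ [k [h [Kk [/Hgrp_fixed [ih sh] ->]]]].
  have [[ik _] _] := Kk.
  have iat := invertible_a_t F t.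
  rewrite (Phi_mul_sigma_fixed (invertibleM ik iat) ih sh) (Phi_Kmul iat Kk).
  rewrite Phi_a_t; split => //; rewrite !mulrBr.
  exact: (sum_expR_mul_sum_expRN (fun i => 4 * t i)).
split; first by move=> g k [ig _]; apply: Phi_Kmul.
split; first by move=> g h [ig _] /Hgrp_fixed [ih sh]; apply: Phi_mul_sigma_fixed.
split; first by move=> g [ig _]; apply: Phi_sigma.
by move=> t s _; apply: Phi_a_t_perm.
Qed.
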